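(* Let $m\ge1$. The $0/1$ matrices $\mathcal{M}^{t,p}_{i,j}$ ($(i,j,t,p)\in\mathcal{I}_{(m,m)}$), $\mathcal{R}^{t,p}_{i,j}$ ($(i,j,t,p)\in\mathcal{I}_{(m,m+1)}$), $\mathcal{L}^{t,p}_{i,j}$ ($(i,j,t,p)\in\mathcal{I}_{(m+1,m)}$) and $\mathcal{F}^{t,p}_{i,j}$ ($(i,j,t,p)\in\mathcal{I}_{(m+1,m+1)}$) form a basis of the centralizer algebra $\mathcal{A}$, and $\dim\mathcal{A}=4\binom{m+4}{4}$.
   Context: $S=\{1,\dots,2m+1\}$, $X=\binom{S}{m}\cup\binom{S}{m+1}$ (vertex set of the doubled Odd graph $2.O_{m+1}$, in which two vertices are adjacent iff one is a proper subset of the other), $x_0=\{1,\dots,m\}$. $G=\mathrm{Sym}(x_0)\times\mathrm{Sym}(S\setminus x_0)$ (the stabilizer of $x_0$ in $\mathrm{Aut}(2.O_{m+1})$). The centralizer algebra $\mathcal{A}$ is the set of complex matrices $B$ with rows and columns indexed by $X$ such that $B_{\sigma(y),\sigma(z)}=B_{y,z}$ for all $\sigma\in G$, $y,z\in X$. For $y,z\subseteq S$, $\varrho(y,z)=(|x_0\cap y|,|x_0\cap z|,|y\cap z|,|x_0\cap y\cap z|)$; for $a,b\in\{m,m+1\}$, $\mathcal{I}_{(a,b)}=\{\varrho(y,z):y\in\binom{S}{a},z\in\binom{S}{b}\}$ and $X^{(i,j,t,p)}_{(a,b)}=\{(y,z)\in\binom{S}{a}\times\binom{S}{b}:\varrho(y,z)=(i,j,t,p)\}$.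 The matrices $\mathcal{M}^{t,p}_{i,j}$ (type I), $\mathcal{R}^{t,p}_{i,j}$ (type II), $\mathcal{L}^{t,p}_{i,j}$ (type III), $\mathcal{F}^{t,p}_{i,j}$ (type IV) are the $X\times X$ matrices whose $(y,z)$-entry is $1$ if $(y,z)$ lies in $X^{(i,j,t,p)}_{(m,m)}$, $X^{(i,j,t,p)}_{(m,m+1)}$, $X^{(i,j,t,p)}_{(m+1,m)}$, $X^{(i,j,t,p)}_{(m+1,m+1)}$ respectively, and $0$ otherwise. *)

From HB Require Import structures.
From mathcomp Require Import all_boot all_order all_algebra all_fingroup.
From mathcomp Require Import algC.
Set Implicit Arguments. Unset Strict Implicit. Unset Printing Implicit Defensive.
Import GRing.Theory Num.Theory.
Local Open Scope ring_scope.

(* S = {1..2m+1} is modelled by 'I_(2*m+1); subsets are {set 'I_(2*m+1)}. *)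
Definition Sset (m : nat) := {set 'I_(2 * m + 1)}.

Definition X (m : nat) :=
  {A : {set 'I_(2 * m + 1)} | (#|A| == m) || (#|A| == m.+1)}.

Definition x0 (m : nat) : {set 'I_(2 * m + 1)} := [set i : 'I_(2 * m + 1) | (i < m)%N].

(* G = Sym(x0) x Sym(S \ x0) = permutations of S stabilizing x0 setwise *)
Definition G (m : nat) : {set {perm 'I_(2 * m + 1)}} :=
  [set s : {perm 'I_(2 * m + 1)} | s @: x0 m == x0 m].

Definition rho (m : nat) (y z : {set 'I_(2 * m + 1)}) : nat * nat * nat * nat :=
  (#|x0 m :&: y|, #|x0 m :&: z|, #|y :&: z|, #|x0 m :&: y :&: z|).

Definition Iset (m a b : nat) : seq (nat * nat * nat * nat) :=
  undup [seq rho y z | y <- enum [set y : {set 'I_(2 * m + 1)} | #|y| == a],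
                       z <- enum [set z : {set 'I_(2 * m + 1)} | #|z| == b]].

Definition XMat (m : nat) := {ffun X m * X m -> algC^o}.

Definition in_centralizer (m : nat) (B : XMat m) : Prop :=
  forall s, s \in G m -> forall y z y' z' : X m,
    val y' = s @: val y -> val z' = s @: val z -> B (y', z') = B (y, z).

Definition Emat (m a b : nat) (q : nat * nat * nat * nat) : XMat m :=
  [ffun yz : X m * X m =>
     if [&& #|val yz.1| == a, #|val yz.2| == b & rho (val yz.1) (val yz.2) == q]
     then 1 else 0].

Definition Mmat m q := Emat m m m q.
Definition Rmat m q := Emat m m m.+1 q.
Definition Lmat m q := Emat m m.+1 m q.
Definition Fmat m q := Emat m m.+1 m.+1 q.

Definition centralizer_family (m : nat) : seq (XMat m) :=
  [seq Mmat m q | q <- Iset m m m] ++ [seq Rmat m q | q <- Iset m m m.+1] ++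
  [seq Lmat m q | q <- Iset m m.+1 m] ++ [seq Fmat m q | q <- Iset m m.+1 m.+1].

From mathcomp Require Import all_boot all_order all_algebra all_fingroup.
From mathcomp Require Import algC zify.
Set Implicit Arguments. Unset Strict Implicit. Unset Printing Implicit Defensive.

(* The matrices of types I-IV are the indicators of the fibres of the map
   pair_key (y, z) = (|y|, |z|, rho y z).  Families of subsets of a finite set with the same intersection
      sizes are simultaneously conjugate under the full symmetric group
      (conjugate_families, via Venn-cell counting); hence the fibres of
      pair_key are exactly the G-orbits on X x X, and A is the space of
      matrices constant on these fibres (centralizerE).
   2. Linear algebra.  Indicators of the distinct nonempty fibres of any map
      are free and span the fibre-invariant functions (FibreIndicators).
   3. Counting.  |I_(m,m)| = C(m+4, 4) through an explicit bijection with the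
      4-part weak compositions of numbers <= m (comp_rho), and complementing
      or exchanging y and z gives |I_(a,b)| = |I_(m,m)| for the other three
      blocks. *)

Ltac bool_cases :=
  repeat match goal with
  | |- context [?x \in ?A] => case: (x \in A)
  | |- context [?x == ?y] => case: (x == y)
  end.
Ltac set_by_cases := apply/setP => ?; rewrite !inE; bool_cases.

Section SimultaneousConjugacy.
Variable T : finType.

Lemma count_mem_map_enum (C : eqType) (f : T -> C) c :
  count_mem c (map f (enum T)) = #|[set x | f x == c]|.
Proof.
rewrite count_map cardsE cardE /enum_mem size_filter.
by rewrite (@eq_filter _ _ predT) // filter_predT; apply: eq_count => x; rewrite !inE.
Qed.

(* Two colourings of T whose colour classes have the same sizes differ by a
   permutation of T: sort both lists of colours and match them position-wise. *)
Lemma recolor_perm (C : finType) (f g : T -> C) :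
  (forall c, #|[set x | f x == c]| = #|[set x | g x == c]|) ->
  exists s : {perm T}, forall x, g (s x) = f x.
Proof.
move=> same_fibres.
pose r : rel C := fun a b => (enum_rank a <= enum_rank b)%N.
have r_tot : total r by move=> a b; apply: leq_total.
have r_tr : transitive r by move=> a b c; apply: leq_trans.
have r_as : antisymmetric r.
  move=> a b /andP[h1 h2]; apply: enum_rank_inj; apply: val_inj; apply/eqP.
  by rewrite eqn_leq; apply/andP; split.
have colours_perm : perm_eq (map f (enum T)) (map g (enum T)).
  by apply/allP => c _ /=; rewrite !count_mem_map_enum same_fibres.
pose L1 := sort (relpre f r) (enum T); pose L2 := sort (relpre g r) (enum T).
have sorted_eq : map f L1 = map g L2.
  by rewrite -!sort_map; apply/(perm_sortP r_tot r_tr r_as).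
have p1 : perm_eq L1 (enum T) by rewrite perm_sort.
have p2 : perm_eq L2 (enum T) by rewrite perm_sort.
have u2 : uniq L2 by rewrite (perm_uniq p2) enum_uniq.
have s12 : size L1 = size L2 by rewrite (perm_size p1) (perm_size p2).
have inL1 x : x \in L1 by rewrite (perm_mem p1) mem_enum.
have idx_lt x : (index x L1 < size L2)%N by rewrite -s12 index_mem.
pose s0 x := nth x L2 (index x L1).
have s0_inj : injective s0.
  move=> x y; rewrite /s0 (set_nth_default y) // => /eqP.
  rewrite nth_uniq // => /eqP e.
  by rewrite -(nth_index x (inL1 x)) -(nth_index x (inL1 y)) e.
exists (perm s0_inj) => x; rewrite permE /s0.
rewrite -(nth_map x (g x) g (idx_lt x)) -sorted_eq (nth_map x (g x) f) ?s12 //.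
by rewrite nth_index.
Qed.

Variable I : finType.

Definition venn (F : I -> {set T}) (U V : {set I}) : nat :=
  #|[set x | [forall k in U, (x \in F k) == (k \in V)]]|.

Lemma venn_cap F (U V : {set I}) :
  U \subset V -> venn F U V = #|\bigcap_(k in U) F k|.
Proof.
move=> sUV; apply: eq_card => x; rewrite !inE; apply/forall_inP/bigcapP.
  by move=> h k kU; move: (h k kU); rewrite (subsetP sUV) // eqb_id.
by move=> h k kU; rewrite (subsetP sUV) // eqb_id h.
Qed.

Lemma venn_split F (U V : {set I}) k : k \in U -> k \notin V ->
  venn F U V + venn F U (k |: V) = venn F (U :\ k) V.
Proof.
move=> kU kV; rewrite /venn -[in RHS](cardsID (F k)) [RHS]addnC.
congr (_ + _); apply: eq_card => x.
  rewrite !inE; apply/forall_inP/andP => [h | [xF h]].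
    have := h k kU; rewrite (negbTE kV) eqbF_neg => xF; split => //.
    by apply/forall_inP => j /setD1P[_ jU]; apply: h.
  move=> j jU; have [-> | jk] := eqVneq j k; first by rewrite (negbTE kV) (negbTE xF).
  by apply: (forall_inP h); rewrite !inE jk.
rewrite !inE; apply/forall_inP/andP => [h | [h xF]].
  have := h k kU; rewrite setU11 eqb_id => xF; split.
    by apply/forall_inP => j /setD1P[jk jU]; move: (h j jU); rewrite !inE (negbTE jk).
  exact: xF.
move=> j jU; have [-> | jk] := eqVneq j k; first by rewrite setU11 xF.
by rewrite !inE (negbTE jk) /=; apply: (forall_inP h); rewrite !inE jk.
Qed.

(* By inclusion-exclusion, the sizes of all Venn cells are determined by the
   sizes of all the intersections of subfamilies. *)
Lemma venn_eq (F F' : I -> {set T}) :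
  (forall U : {set I}, #|\bigcap_(k in U) F k| = #|\bigcap_(k in U) F' k|) ->
  forall U V : {set I}, venn F U V = venn F' U V.
Proof.
move=> same_caps U V; move Hn : #|U :\: V| => n.
elim: n U V Hn => [|n IH] U V Hn.
  have sUV : U \subset V by rewrite -setD_eq0 -cards_eq0 Hn.
  by rewrite !venn_cap.
have [k kUV] : exists k, k \in U :\: V by apply/set0Pn; rewrite -cards_eq0 Hn.
have /setDP[kU kV] := kUV.
have Hk : #|(U :\: V) :\ k| = n by have := cardsD1 k (U :\: V); rewrite kUV Hn; lia.
have e1 : venn F U (k |: V) = venn F' U (k |: V).
  by apply: IH; rewrite -Hk; apply: eq_card => ?; rewrite !inE; bool_cases.
have e2 : venn F (U :\ k) V = venn F' (U :\ k) V.
  by apply: IH; rewrite -Hk; apply: eq_card => ?; rewrite !inE; bool_cases.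
by move: (venn_split F kU kV) (venn_split F' kU kV); rewrite e1 e2; lia.
Qed.

Lemma conjugate_families (F F' : I -> {set T}) :
  (forall U : {set I}, #|\bigcap_(k in U) F k| = #|\bigcap_(k in U) F' k|) ->
  exists s : {perm T}, forall k, s @: F k = F' k.
Proof.
move=> same_caps.
pose colour (F0 : I -> {set T}) x := [set k | x \in F0 k].
have fibre F0 c : #|[set x | colour F0 x == c]| = venn F0 setT c.
  apply: eq_card => x; rewrite !inE; apply/eqP/forall_inP => [<- k _ | h].
    by rewrite inE.
  by apply/setP => k; rewrite inE; apply/eqP/h; rewrite inE.
have [s hs] : exists s : {perm T}, forall x, colour F' (s x) = colour F x.
  by apply: recolor_perm => c; rewrite !fibre (venn_eq same_caps).
exists s => k; apply/setP => y; apply/imsetP/idP => [[x xF ->] | yF'].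
  by have /setP/(_ k) := hs x; rewrite !inE xF.
exists ((s^-1)%g y); last by rewrite permKV.
by have /setP/(_ k) := hs ((s^-1)%g y); rewrite !inE permKV yF'.
Qed.
End SimultaneousConjugacy.

Lemma conjugate_triples (T : finType) (A B C B' C' : {set T}) :
  #|B| = #|B'| -> #|C| = #|C'| -> #|A :&: B| = #|A :&: B'| ->
  #|A :&: C| = #|A :&: C'| -> #|B :&: C| = #|B' :&: C'| ->
  #|A :&: B :&: C| = #|A :&: B' :&: C'| ->
  exists s : {perm T}, [/\ s @: A = A, s @: B = B' & s @: C = C'].
Proof.
move=> eB eC eAB eAC eBC eABC.
have [s hs] : exists s : {perm T},
    forall k, s @: tnth [tuple A; B; C] k = tnth [tuple A; B'; C'] k.
  apply: conjugate_families => U; rewrite [in LHS]big_mkcond [in RHS]big_mkcond.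
  rewrite !big_ord_recl !big_ord0 /= !(tnth_nth set0) /=.
  by case: (_ \in U); case: (_ \in U); case: (_ \in U); rewrite /= ?setIT ?setTI ?setIA.
by exists s; split; [apply: (hs ord0) | apply: (hs (lift ord0 ord0)) | apply: (hs ord_max)].
Qed.

Section FibreIndicators.
Import GRing.Theory.
Local Open Scope ring_scope.
Variables (F : fieldType) (D : finType) (K : eqType) (key : D -> K).

Definition fibre_indicator (k : K) : {ffun D -> F^o} :=
  [ffun d => if key d == k then 1 else 0].

Definition key_invariant (f : {ffun D -> F^o}) : Prop :=
  forall d d', key d = key d' -> f d = f d'.

Lemma scale_ffunE (c : F) (f : {ffun D -> F^o}) d : (c *: f) d = c * f d.
Proof. by rewrite /GRing.scale /= ffunE. Qed.

Lemma fibre_indicator_inj d k k' :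
  key d = k -> fibre_indicator k = fibre_indicator k' -> k = k'.
Proof.
move=> kd /ffunP/(_ d); rewrite !ffunE kd eqxx.
by case: eqP => // _ /eqP; rewrite oner_eq0.
Qed.

Lemma free_fibre_indicators (ks : seq K) :
  uniq ks -> (forall k, k \in ks -> exists d, key d = k) ->
  free (map fibre_indicator ks).
Proof.
move=> ks_uniq ks_real; set X := map fibre_indicator ks.
have X_uniq : uniq X.
  rewrite /X map_inj_in_uniq // => k k' /ks_real[d kd] _; exact: (fibre_indicator_inj kd).
apply/(@freeP _ _ _ (in_tuple X)) => c sum0 i.
have [k kks Xi] : exists2 k, k \in ks & X`_i = fibre_indicator k.
  by apply/mapP; apply: mem_nth.
have [d kd] := ks_real k kks.
have /ffunP/(_ d) := sum0; rewrite sum_ffunE ffunE (bigD1 i) //= big1 ?addr0.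
  by rewrite scale_ffunE Xi ffunE kd eqxx mulr1.
move=> j ji; rewrite scale_ffunE.
have [k' k'ks Xj] : exists2 k', k' \in ks & X`_j = fibre_indicator k'.
  by apply/mapP; apply: mem_nth.
rewrite Xj ffunE kd; case: eqP => [kk'|]; last by rewrite mulr0.
by case/negP: ji; apply/eqP/val_inj/eqP; rewrite -(nth_uniq 0 _ _ X_uniq) //= Xi Xj kk'.
Qed.

Lemma span_fibre_indicators (ks : seq K) (f : {ffun D -> F^o}) :
  uniq ks -> (forall d, key d \in ks) ->
  f \in <<map fibre_indicator ks>>%VS <-> key_invariant f.
Proof.
move=> ks_uniq ks_cover; set X := map fibre_indicator ks; split.
  move=> fX d d' kdd'; rewrite (coord_span (X := in_tuple X) fX) !sum_ffunE.
  apply: eq_bigr => i _; rewrite !scale_ffunE; congr (_ * _).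
  have [k _ ->] : exists2 k, k \in ks & X`_i = fibre_indicator k.
    by apply/mapP; apply: mem_nth.
  by rewrite !ffunE kdd'.
move=> f_inv; pose c k := if [pick d | key d == k] is Some d then f d else 0.
have -> : f = \sum_(k <- ks) c k *: fibre_indicator k.
  apply/ffunP => d; rewrite sum_ffunE (bigD1_seq (key d)) //= big1 => [|k kd].
    rewrite addr0 scale_ffunE ffunE eqxx mulr1 /c.
    by case: pickP => [d' /eqP/f_inv // | /(_ d)]; rewrite eqxx.
  by rewrite scale_ffunE ffunE eq_sym (negbTE kd) mulr0.
rewrite big_seq; apply: memv_suml => k kks.
by rewrite memvZ // memv_span // map_f.
Qed.
End FibreIndicators.

Lemma size_le_cancel (T : eqType) (s1 s2 : seq T) (f g : T -> T) :
  uniq s1 -> {in s1, cancel f g} -> {in s1, forall x, f x \in s2} ->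
  size s1 <= size s2.
Proof.
move=> s1_uniq fK f_s2; rewrite -(size_map f); apply: uniq_leq_size.
  by rewrite map_inj_in_uniq //; apply: can_in_inj fK.
by move=> _ /mapP[x xs1 ->]; apply: f_s2.
Qed.

Section VennBounds.
Variables (T : finType) (n : nat) (A y z : {set T}).
Hypotheses (cardT : #|T| = 2 * n + 1) (cardA : #|A| = n).
Hypotheses (cardy : #|y| = n) (cardz : #|z| = n).

(* The intersection numbers (i, j, t, p) = rho y z of two n-subsets y, z
   relative to an n-subset A of a (2n+1)-set: all eight Venn regions of A, y, z
   have nonnegative size. *)
Lemma venn_bounds :
  let i := #|A :&: y| in let j := #|A :&: z| in let t := #|y :&: z| in
  let p := #|A :&: y :&: z| in
  [/\ p <= i, p <= j, p <= t, i + j <= n + p &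
   [/\ i + t <= n + p, j + t <= n + p & n + p <= 1 + i + j + t]].
Proof.
move=> i j t p.
have pi : p <= i by apply: subset_leq_card; apply/subsetP => x; rewrite !inE; bool_cases.
have pj : p <= j by apply: subset_leq_card; apply/subsetP => x; rewrite !inE; bool_cases.
have pt : p <= t by apply: subset_leq_card; apply/subsetP => x; rewrite !inE; bool_cases.
have union_le (B C D : {set T}) : B :&: C = A :&: y :&: z ->
    B :|: C \subset D -> #|B| + #|C| <= #|D| + p.
  by move=> BCD sBCD; rewrite -cardsUI BCD leq_add2r subset_leq_card.
have ij : i + j <= n + p.
  by rewrite -cardA union_le //; [set_by_cases | apply/subsetP => x; rewrite !inE; bool_cases].
have it : i + t <= n + p.
  by rewrite -cardy union_le //; [set_by_cases | apply/subsetP => x; rewrite !inE; bool_cases].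
have jt : j + t <= n + p.
  by rewrite -cardz union_le //; [set_by_cases | apply/subsetP => x; rewrite !inE; bool_cases].
have n000 : n + p <= 1 + i + j + t.
  have h1 := cardsUI A y; have h2 := cardsUI (A :|: y) z.
  have h3 := cardsUI (A :&: z) (y :&: z).
  rewrite (_ : (A :|: y) :&: z = A :&: z :|: y :&: z) in h2; last by set_by_cases.
  rewrite (_ : A :&: z :&: (y :&: z) = A :&: y :&: z) in h3; last by set_by_cases.
  have h4 : #|A :|: y :|: z| <= 2 * n + 1 by rewrite -cardT max_card.
  move: h1 h2 h3 h4; rewrite -/i -/j -/t -/p; lia.
by split.
Qed.
End VennBounds.

Lemma card_ord_pred n (A : {set 'I_n}) (P : nat -> bool) :
  (forall i : 'I_n, (i \in A) = P i) -> #|A| = count P (iota 0 n).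
Proof.
move=> AP; rewrite (@eq_card _ _ [set i : 'I_n | P i]) => [|i]; last by rewrite inE AP.
rewrite -val_ord_enum count_map cardsE cardE /enum_mem size_filter unlock /=.
by apply: eq_count.
Qed.

Lemma count_iota_true (P : nat -> bool) a n :
  (forall k, a <= k < a + n -> P k) -> count P (iota a n) = n.
Proof.
elim: n a => [|n IH] a h //=.
by rewrite h ?IH => [|k hk|]; [lia | apply: h; lia | lia].
Qed.

Lemma count_iota_false (P : nat -> bool) a n :
  (forall k, a <= k < a + n -> ~~ P k) -> count P (iota a n) = 0.
Proof.
elim: n a => [|n IH] a h //=.
by rewrite (negbTE (h a _)) ?IH //= => [k hk|]; [apply: h | ]; lia.
Qed.

Ltac count_intervals :=
  repeat rewrite iotaD count_cat;
  repeat match goal with |- context [count ?P (iota ?a ?n)] =>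
    first [ rewrite (@count_iota_true P a n); [| move=> k /andP [hk1 hk2]; rewrite /=; lia]
          | rewrite (@count_iota_false P a n); [| move=> k /andP [hk1 hk2]; rewrite /=; lia] ]
  end.

Lemma card_x0 m : #|x0 m| = m.
Proof.
rewrite (@card_ord_pred _ _ (fun k => k < m)) => [|i]; last by rewrite inE.
by rewrite (_ : 2 * m + 1 = m + (m + 1)); [count_intervals; lia | lia].
Qed.

(* Any sizes n_abc of the eight Venn regions of x0, y, z (a, b, c telling
   membership in x0, y, z) compatible with |x0| = m and |S \ x0| = m + 1 are
   realised: y and z are built as unions of consecutive intervals of S. *)
Lemma realize_venn m (n111 n110 n101 n100 n011 n010 n001 n000 : nat) :
  n111 + n110 + n101 + n100 = m -> n011 + n010 + n001 + n000 = m.+1 ->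
  exists y z : {set 'I_(2 * m + 1)},
    [/\ #|y| = n111 + n110 + n011 + n010, #|z| = n111 + n101 + n011 + n001 &
        rho y z = (n111 + n110, n111 + n101, n111 + n011, n111)].
Proof.
move=> inside outside.
pose Py k := (k < n111 + n110) || (m <= k < m + n011 + n010).
pose Pz k := [|| k < n111, n111 + n110 <= k < n111 + n110 + n101,
                 m <= k < m + n011 | m + n011 + n010 <= k < m + n011 + n010 + n001].
exists [set k : 'I_(2 * m + 1) | Py k], [set k : 'I_(2 * m + 1) | Pz k].
have eN : 2 * m + 1 = n111 + (n110 + (n101 + (n100 + (n011 + (n010 + (n001 + n000))))))
  by lia.
split; last congr (_, _, _, _).
- rewrite (@card_ord_pred _ _ Py) => [|i]; last by rewrite inE.
  by rewrite eN /Py; count_intervals; lia.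
- rewrite (@card_ord_pred _ _ Pz) => [|i]; last by rewrite inE.
  by rewrite eN /Pz; count_intervals; lia.
- rewrite (@card_ord_pred _ _ (fun k => (k < m) && Py k)) => [|i]; last by rewrite !inE.
  by rewrite eN /Py; count_intervals; lia.
- rewrite (@card_ord_pred _ _ (fun k => (k < m) && Pz k)) => [|i]; last by rewrite !inE.
  by rewrite eN /Pz; count_intervals; lia.
- rewrite (@card_ord_pred _ _ (fun k => Py k && Pz k)) => [|i]; last by rewrite !inE.
  by rewrite eN /Py /Pz; count_intervals; lia.
- rewrite (@card_ord_pred _ _ (fun k => (k < m) && Py k && Pz k)) => [|i];
    last by rewrite !inE.
  by rewrite eN /Py /Pz; count_intervals; lia.
Qed.

(* Weak compositions of numbers at most m into 4 parts; there are
   'C(m + 4, 4) of them (card_partial_ord_partitions). *)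
Definition compositions m := [set t : 4.-tuple 'I_m.+1 | \sum_(i <- t) i <= m].

Definition comp_rho_seq m (e : seq nat) : nat * nat * nat * nat :=
  let e2 := nth 0 e 0 in let e3 := nth 0 e 1 in let e4 := nth 0 e 2 in
  let e5 := nth 0 e 3 in let e1 := m - (e2 + e3 + e4 + e5) in
  (e1 + e5./2 + e2, e1 + e5./2 + e3, e1 + e5./2 + e4,
   if odd e5 then e1 + e5./2 else e1).

Definition comp_rho m (t : 4.-tuple 'I_m.+1) :=
  comp_rho_seq m (map (fun i : 'I_m.+1 => nat_of_ord i) t).

Lemma tuple4P m (t : 4.-tuple 'I_m.+1) :
  exists a b c d : 'I_m.+1, t = [tuple a; b; c; d].
Proof.
case: t => [[|a [|b [|c [|d [|]]]]] //= st]; exists a, b, c, d; exact: val_inj.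
Qed.

Lemma compositions4 m (a b c d : 'I_m.+1) :
  ([tuple a; b; c; d] \in compositions m) = (a + b + c + d <= m).
Proof. by rewrite inE /= !big_cons big_nil !addnA addn0. Qed.

Lemma comp_rho_realized m t : t \in compositions m ->
  exists y z : {set 'I_(2 * m + 1)}, [/\ #|y| = m, #|z| = m & rho y z = comp_rho t].
Proof.
have [a [b [c [d ->]]]] := tuple4P t; rewrite compositions4 => sum_le.
rewrite /comp_rho /comp_rho_seq /=; set e1 := m - _; set h := d./2.
have d_eq := odd_double_half d; case: ifP => d_odd; rewrite d_odd /= in d_eq.
- have [y [z [cy cz ryz]]] := @realize_venn m (e1 + h) a b (c + h + 1) c (b + h + 1)
     (a + h + 1) e1 ltac:(lia) ltac:(lia).
  exists y, z; split; [rewrite cy; lia | rewrite cz; lia |].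
  by rewrite ryz; congr (_, _, _, _); lia.
- have [y [z [cy cz ryz]]] := @realize_venn m e1 (a + h) (b + h) c (c + h) b
     a (e1 + h + 1) ltac:(lia) ltac:(lia).
  exists y, z; split; [rewrite cy; lia | rewrite cz; lia |].
  by rewrite ryz; congr (_, _, _, _); lia.
Qed.

(* Conversely every intersection pattern of two m-subsets is a value of
   comp_rho: e5 is even when m + 2p <= i + j + t and odd otherwise. *)
Lemma comp_rho_onto m (y z : {set 'I_(2 * m + 1)}) : #|y| = m -> #|z| = m ->
  exists2 t, t \in compositions m & rho y z = comp_rho t.
Proof.
move=> cy cz; have := venn_bounds (card_ord _) (card_x0 m) cy cz.
rewrite /rho; set i := #|_ :&: y|; set j := #|_ :&: z|; set t := #|y :&: z|.
set p := #|_ :&: y :&: z| => -[pi pj pt ij [it jt n000]].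
case: (leqP (m + 2 * p) (i + j + t)) => hc.
- exists [tuple inord (m + p - j - t); inord (m + p - i - t); inord (m + p - i - j);
                inord (2 * (i + j + t - m - 2 * p))].
    by rewrite compositions4 !inordK; lia.
  rewrite /comp_rho /comp_rho_seq /= !inordK; try lia.
  by case: ifP => d_odd; congr (_, _, _, _); lia.
- exists [tuple inord (i - p); inord (j - p); inord (t - p);
                inord (2 * (m + 2 * p - (i + j + t)) - 1)].
    by rewrite compositions4 !inordK; lia.
  rewrite /comp_rho /comp_rho_seq /= !inordK; try lia.
  by case: ifP => d_odd; congr (_, _, _, _); lia.
Qed.

Lemma comp_rho_inj m : {in compositions m &, injective (@comp_rho m)}.
Proof.
move=> t1 t2; have [a [b [c [d ->]]]] := tuple4P t1.
have [a' [b' [c' [d' ->]]]] := tuple4P t2; rewrite !compositions4 => le1 le2.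
rewrite /comp_rho /comp_rho_seq /= => eq_rho.
have [ea eb ec ed] : [/\ a = a' :> nat, b = b' :> nat, c = c' :> nat & d = d' :> nat].
  move: eq_rho; have := odd_double_half d; have := odd_double_half d'.
  by case: (odd d); case: (odd d') => /= hd hd' [e1 e2 e3 e4]; split; lia.
by apply: val_inj => /=; congr [:: _; _; _; _]; apply: val_inj.
Qed.

Lemma IsetP m a b q : q \in Iset m a b <->
  exists y z : {set 'I_(2 * m + 1)}, [/\ #|y| = a, #|z| = b & rho y z = q].
Proof.
rewrite /Iset mem_undup; split.
  case/allpairsP => [[y z] [/= yP zP ->]]; exists y, z.
  by move: yP zP; rewrite !mem_enum !inE => /eqP -> /eqP ->.
move=> [y [z [cy cz <-]]]; apply/allpairsP; exists (y, z) => /=.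
by rewrite !mem_enum !inE cy cz !eqxx.
Qed.

Lemma size_Iset_mm m : size (Iset m m m) = 'C(m + 4, 4).
Proof.
rewrite -[m + 4]addnC -card_partial_ord_partitions -/(compositions m) cardE.
rewrite -(size_map (@comp_rho m)); apply/perm_size/uniq_perm.
- exact: undup_uniq.
- by rewrite map_inj_in_uniq ?enum_uniq // => t1 t2; rewrite !mem_enum; apply: comp_rho_inj.
move=> q; apply/idP/mapP => [/IsetP[y [z [cy cz <-]]] | [t]].
  by have [t tc ->] := comp_rho_onto cy cz; exists t; rewrite ?mem_enum.
rewrite mem_enum => /comp_rho_realized[y [z [cy cz ryz]]] ->.
by apply/IsetP; exists y, z.
Qed.

Definition compl_rho m a (q : nat * nat * nat * nat) :=
  let: (i, j, t, p) := q in (i, m - j, a - t, i - p).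

Lemma rho_setCr m (y z : {set 'I_(2 * m + 1)}) :
  rho y (~: z) = compl_rho m #|y| (rho y z).
Proof. by rewrite /rho /compl_rho -!setDE !cardsD card_x0. Qed.

Lemma size_Iset_compl m a b b' : b + b' = 2 * m + 1 ->
  size (Iset m a b) = size (Iset m a b').
Proof.
have compl_le c c' : c + c' = 2 * m + 1 -> size (Iset m a c) <= size (Iset m a c').
  move=> cc'; apply: (@size_le_cancel _ _ _ (compl_rho m a) (compl_rho m a)).
  - exact: undup_uniq.
  - move=> _ /IsetP[y [z [cy cz <-]]]; rewrite /rho /compl_rho.
    have := card_x0 m; have: #|x0 m :&: z| <= #|x0 m| by apply/subset_leq_card/subsetIl.
    have: #|y :&: z| <= #|y| by apply/subset_leq_card/subsetIl.
    have: #|x0 m :&: y :&: z| <= #|x0 m :&: y| by apply/subset_leq_card/subsetIl.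
    by rewrite cy => *; congr (_, _, _, _); lia.
  - move=> _ /IsetP[y [z [cy cz <-]]]; apply/IsetP; exists y, (~: z).
    by rewrite rho_setCr cy; split=> //; have := cardsC z; rewrite card_ord; lia.
by move=> bb'; apply/eqP; rewrite eqn_leq !compl_le // addnC.
Qed.

Definition swap_rho (q : nat * nat * nat * nat) :=
  let: (i, j, t, p) := q in (j, i, t, p).

Lemma rho_swap m (y z : {set 'I_(2 * m + 1)}) : rho z y = swap_rho (rho y z).
Proof. by rewrite /rho /= -!setIA (setIC z y). Qed.

Lemma size_Iset_swap m a b : size (Iset m a b) = size (Iset m b a).
Proof.
have swap_le c c' : size (Iset m c c') <= size (Iset m c' c).
  apply: (@size_le_cancel _ _ _ swap_rho swap_rho); first exact: undup_uniq.
    by move=> [[[i j] t] p].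
  by move=> _ /IsetP[y [z [cy cz <-]]]; apply/IsetP; exists z, y; rewrite rho_swap.
by apply/eqP; rewrite eqn_leq !swap_le.
Qed.

Section Orbits.
Variable m : nat.

(* The complete G-invariant of a pair (y, z) of vertices: |y|, |z| and rho y z. *)
Definition pair_key (yz : X m * X m) : nat * nat * (nat * nat * nat * nat) :=
  (#|val yz.1|, #|val yz.2|, rho (val yz.1) (val yz.2)).

Lemma rho_perm (s : {perm 'I_(2 * m + 1)}) (y z : {set 'I_(2 * m + 1)}) :
  s @: x0 m = x0 m -> rho (s @: y) (s @: z) = rho y z.
Proof.
move=> sx0; have s_inj : injective s by apply: perm_inj.
have imI (A B : {set 'I_(2 * m + 1)}) : s @: A :&: s @: B = s @: (A :&: B).
  by rewrite imsetI // => a b _ _; apply: s_inj.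
by rewrite /rho -{1 2 3}sx0 !imI !card_imset.
Qed.

Lemma pair_key_orbit (yz yz' : X m * X m) :
  pair_key yz = pair_key yz' <->
  exists2 s, s \in G m & val yz'.1 = s @: val yz.1 /\ val yz'.2 = s @: val yz.2.
Proof.
split => [|[s sG [e1 e2]]]; last first.
  have s_inj : injective s by apply: perm_inj.
  by rewrite /pair_key e1 e2 !card_imset // rho_perm //; move: sG; rewrite inE => /eqP.
rewrite /pair_key /rho => -[e1 e2 e3 e4 e5 e6].
have [s [sx0 sy sz]] := conjugate_triples e1 e2 e3 e4 e5 e6.
by exists s; [rewrite inE sx0 | split].
Qed.

Lemma centralizerE (B : XMat m) : in_centralizer B <-> key_invariant pair_key B.
Proof.
split=> [B_inv yz yz' /pair_key_orbit[s sG [e1 e2]] | B_inv s sG y z y' z' e1 e2].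
  by have := B_inv s sG _ _ _ _ e1 e2; rewrite -!surjective_pairing.
by apply: B_inv; apply/esym/pair_key_orbit; exists s.
Qed.

Definition key_sizes := [:: (m, m); (m, m.+1); (m.+1, m); (m.+1, m.+1)].
Definition all_keys := [seq (ab, q) | ab <- key_sizes, q <- Iset m ab.1 ab.2].

(* The four blocks have distinct sizes (a, b), so all_keys is duplicate-free. *)
Lemma all_keys_uniq : uniq all_keys.
Proof.
apply: allpairs_uniq_dep => [|ab _|]; last 2 first.
- exact: undup_uniq.
- by move=> [ab q] [ab' q'] _ _ /= [-> ->].
by rewrite /= !inE !xpair_eqE !eqxx ?(gtn_eqF (ltnSn m)) ?(ltn_eqF (ltnSn m)).
Qed.

Lemma all_keysP k :
  k \in all_keys <-> exists yz : X m * X m, pair_key yz = k.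
Proof.
split => [/allpairsPdep[[a b] [q [abs /IsetP[y [z [cy cz ryz]]] ->]]] | [[y z] <-]].
  have ab_sizes : ((a == m) || (a == m.+1)) && ((b == m) || (b == m.+1)).
    by move: abs; rewrite !inE !xpair_eqE => /or4P[] /andP[/eqP-> /eqP->]; rewrite !eqxx ?orbT.
  move: cy cz => /= cy cz; have /andP[ya zb] := ab_sizes.
  rewrite -cy in ya; rewrite -cz in zb.
  by exists (exist _ y ya, exist _ z zb); rewrite /pair_key /= cy cz ryz.
apply/allpairsPdep; exists (#|val y|, #|val z|), (rho (val y) (val z)); split => //.
  by case: y z => [y /orP[]/eqP->] [z /orP[]/eqP->]; rewrite !inE eqxx ?orbT.
by apply/IsetP; exists (val y), (val z).
Qed.

Lemma size_all_keys : size all_keys = 4 * 'C(m + 4, 4).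
Proof.
have e2 : size (Iset m m m.+1) = size (Iset m m m) by apply: size_Iset_compl; lia.
have e3 : size (Iset m m.+1 m) = size (Iset m m m.+1) by apply: size_Iset_swap.
have e4 : size (Iset m m.+1 m.+1) = size (Iset m m.+1 m) by apply: size_Iset_compl; lia.
by rewrite size_allpairs_dep /= e4 e3 e2 size_Iset_mm; lia.
Qed.

End Orbits.

Lemma Emat_indicator m a b q :
  Emat m a b q = fibre_indicator algC (@pair_key m) (a, b, q).
Proof. by apply/ffunP => yz; rewrite !ffunE /pair_key !xpair_eqE andbA. Qed.

Lemma centralizer_familyE m :
  centralizer_family m = map (fibre_indicator algC (@pair_key m)) (all_keys m).
Proof.
rewrite /centralizer_family /all_keys /= !map_cat -!map_comp cats0.
by congr (_ ++ _ ++ _ ++ _); apply: eq_map => q; apply: Emat_indicator.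
Qed.

Theorem theorem3p4 (m : nat) (hm : (1 <= m)%N) :
  exists A : {vspace XMat m},
    (forall B : XMat m, B \in A <-> in_centralizer B) /\
    basis_of A (centralizer_family m) /\
    \dim A = (4 * 'C(m + 4, 4))%N.
Proof.
have keys_real k : k \in all_keys m -> exists yz : X m * X m, pair_key yz = k.
  by move=> kk; apply/all_keysP.
have free_fam : free (centralizer_family m).
  rewrite centralizer_familyE; apply: free_fibre_indicators => //.
  exact: all_keys_uniq.
exists <<centralizer_family m>>%VS; split; [|split].
- move=> B; rewrite centralizerE centralizer_familyE.
  apply: span_fibre_indicators; first exact: all_keys_uniq.
  by move=> yz; apply/all_keysP; exists yz.
- by rewrite /basis_of eqxx free_fam.
- by rewrite (eqP free_fam) centralizer_familyE size_map size_all_keys.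
Qed.
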